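(* Let $D,N\in\mathbf{N}$. (a) A measure $\mu$ maximizes $E_\infty$ over $\mathcal{M}_N^{=}(\mathbf{S}^D)$ if and only if there exist an orthonormal basis $v_1,\dots,v_{D+1}$ of $\mathbf{R}^{D+1}$ and $x_1,\dots,x_N\in\mathbf{S}^D$ such that $\mu=\sum_{i=1}^N\delta_{x_i}$ and $x_i\sim v_j$ whenever $i\equiv j\pmod{D+1}$. (b) Let $V$ be a $D$-dimensional linear subspace of $\mathbf{R}^{D+1}$, let $p\in\mathbf{S}^D$ be such that $\mathbf{S}^D\cap V^\perp=\{p,-p\}$, and let $k\in\{0,1,\dots,N\}$ with $k\ge\frac{DN}{D+1}$. Then $\mu=\sum_{i=1}^N\delta_{x_i}$ maximizes $E_\infty$ over $\mathcal{M}^V_{N,k}(\mathbf{S}^D)$ if and only if $x_i\sim p$ for every $x_i\notin V$, and there exists an orthonormal basis $v_1,\dots,v_D$ of $V$ such that for every $j=1,\dots,D$, the number $|\{i: x_i\sim v_j\}|$ equals either $\lceil k/D\rceil$ or $\lfloor k/D\rfloor$.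
   Context: $\mathbf{S}^D=\{x\in\mathbf{R}^{D+1}:|x|=1\}$. For $x,y\in\mathbf{S}^D$, write $x\sim y$ if $x=y$ or $x=-y$. Define $\Lambda^\infty(x,y)=1$ if $x\cdot y=0$ and $0$ otherwise, and for a finite nonnegative Borel measure $\mu$ on $\mathbf{S}^D$, $E_\infty(\mu)=\frac12\iint\Lambda^\infty(x,y)\,d\mu(x)\,d\mu(y)$. $\delta_x$ is the Dirac mass at $x$. $\mathcal{M}_N^{=}(\mathbf{S}^D)$ is the set of measures $\sum_{i=1}^N\delta_{x_i}$ with $x_i\in\mathbf{S}^D$ (not necessarily distinct). For a $D$-dimensional subspace $V$ and $k\in\{0,\dots,N\}$, $\mathcal{M}^V_{N,k}(\mathbf{S}^D)=\{\mu\in\mathcal{M}_N^{=}(\mathbf{S}^D): \mu(V)=k\}$, where $\mu(V)$ means $\mu(V\cap\mathbf{S}^D)$. *)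

(* points of R^(D+1) are row vectors 'rV[R]_(D.+1), R : realType. *)
From HB Require Import structures.
From mathcomp Require Import all_boot all_order all_algebra.
From mathcomp Require Import boolp classical_sets reals.
Set Implicit Arguments. Unset Strict Implicit. Unset Printing Implicit Defensive.
Import Order.TTheory GRing.Theory Num.Theory.
Local Open Scope ring_scope.

Section Defs.
Variable R : realType.

Definition dot n (u v : 'rV[R]_n) : R := \sum_(i < n) u 0 i * v 0 i.

Definition antip n (x y : 'rV[R]_n) : Prop := x = y \/ x = - y.

Definition on_sphere n (x : 'rV[R]_n) : Prop := dot x x = 1.

Definition Lam n (x y : 'rV[R]_n) : R := if dot x y == 0 then 1 else 0.

(* The measure  sum_{i=1}^N delta_{x_i}  as a set function A |-> #{i | x_i in A}. *)
Definition dirac_sum n N (x : 'I_N -> 'rV[R]_n) : set 'rV[R]_n -> nat :=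
  fun A => #|[set i : 'I_N | `[< A (x i) >] ]|.

(* E_infty(sum_i delta_{x_i}) = 1/2 \iint Lambda^infty d mu d mu
   = 1/2 sum_{i,j} Lambda^infty(x_i, x_j). *)
Definition Einf n N (x : 'I_N -> 'rV[R]_n) : R :=
  2^-1 * \sum_(i < N) \sum_(j < N) Lam (x i) (x j).

(* M_N^=(S^D), described by the configurations of its atoms. *)
Definition in_MN n N (x : 'I_N -> 'rV[R]_n) : Prop := forall i, on_sphere (x i).

(* M^V_{N,k}(S^D): additionally mu(V) = #{i | x_i in V} = k; V is the
   row space of the square matrix V. *)
Definition in_MNkV n N (V : 'M[R]_n) (k : nat) (x : 'I_N -> 'rV[R]_n) : Prop :=
  in_MN x /\ #|[set i : 'I_N | (x i <= V)%MS]| = k.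

Definition maximizes n N (P : ('I_N -> 'rV[R]_n) -> Prop) (x : 'I_N -> 'rV[R]_n) :=
  P x /\ forall y, P y -> Einf y <= Einf x.

Definition onb_of n m (V : 'M[R]_n) (v : 'I_m -> 'rV[R]_n) : Prop :=
  (forall i j, dot (v i) (v j) = (i == j)%:R) /\ (\matrix_(j < m) v j == V)%MS.

Definition ceil_div (k D : nat) : nat := (k + D.-1) %/ D.

End Defs.

(* Call two points adjacent when they are orthogonal, so that E_infty counts adjacent
   pairs. Among configurations of N nonzero vectors of a d-dimensional space W, a
   maximizer survives Zykov symmetrization (replacing a point by a copy of a point not
   orthogonal to it never gains adjacent pairs), which forces non-orthogonality to be an
   equivalence relation whose classes are parallel families. Hence the points lie on the
   lines of an orthonormal basis of W and the number of ordered adjacent pairs is N^2 minus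
   the sum of the squared class sizes: it is maximal exactly when the classes are balanced
   (Turan's theorem for the orthogonality graph). This is (a), with W = R^(D+1).
   For (b), split each point into its projection on V and a multiple of the pole p. The
   poles are orthogonal to all of V, and the projections of the points that are neither in V
   nor poles form, together with the points of V, a configuration of V; under the constraint
   D N <= (D+1) k each such oblique point then costs at least one adjacent pair. So the
   maximizers have all points off V at the poles and a balanced configuration in V. *)

From HB Require Import structures.
From mathcomp Require Import all_boot all_order all_algebra.
From mathcomp Require Import boolp classical_sets reals.
From mathcomp Require Import zify ring.
From mathcomp Require Import fingroup perm.
Import Order.TTheory GRing.Theory Num.Theory.

Set Implicit Arguments. Unset Strict Implicit. Unset Printing Implicit Defensive.
Local Open Scope ring_scope.

Section Dot.
Variables (R : realType) (m : nat).
Implicit Types (a b u v w : 'rV[R]_m).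

Lemma dotC u v : dot u v = dot v u.
Proof. by apply: eq_bigr => i _; rewrite mulrC. Qed.

Lemma dotDl u v w : dot (u + v) w = dot u w + dot v w.
Proof. by rewrite /dot -big_split; apply: eq_bigr => i _; rewrite mxE mulrDl. Qed.

Lemma dotZl c u w : dot (c *: u) w = c * dot u w.
Proof. by rewrite /dot mulr_sumr; apply: eq_bigr => i _; rewrite mxE mulrA. Qed.

Lemma dotNl u w : dot (- u) w = - dot u w.
Proof. by rewrite -scaleN1r dotZl mulN1r. Qed.

Lemma dotBl u v w : dot (u - v) w = dot u w - dot v w.
Proof. by rewrite dotDl dotNl. Qed.

Lemma dotDr u v w : dot w (u + v) = dot w u + dot w v.
Proof. by rewrite dotC dotDl !(dotC w). Qed.

Lemma dotZr c u w : dot w (c *: u) = c * dot w u.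
Proof. by rewrite dotC dotZl dotC. Qed.

Lemma dotNr u w : dot w (- u) = - dot w u.
Proof. by rewrite dotC dotNl dotC. Qed.

Lemma dot0l w : dot 0 w = 0.
Proof. by rewrite -(scale0r 0) dotZl mul0r. Qed.

Lemma dot0r w : dot w 0 = 0.
Proof. by rewrite dotC dot0l. Qed.

Lemma dot_self_ge0 u : 0 <= dot u u.
Proof. by apply: sumr_ge0 => i _; rewrite -expr2 sqr_ge0. Qed.

Lemma dot_self_eq0 u : (dot u u == 0) = (u == 0).
Proof.
apply/idP/eqP => [|->]; last by rewrite dot0l.
rewrite /dot psumr_eq0 => [/allP u0|i _]; last by rewrite -expr2 sqr_ge0.
apply/matrixP => i j; rewrite ord1 mxE.
by have /implyP/(_ isT) := u0 j (mem_index_enum j); rewrite -expr2 sqrf_eq0 => /eqP.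
Qed.

Lemma dot_self1_neq0 u : dot u u = 1 -> u != 0.
Proof. by move=> u1; rewrite -dot_self_eq0 u1 oner_eq0. Qed.

Lemma dot_mulmx_tr u v : dot u v = (u *m v^T) 0 0.
Proof. by rewrite !mxE; apply: eq_bigr => i _; rewrite !mxE. Qed.

Lemma sub_kermx_tr u v : (u <= kermx v^T)%MS = (dot u v == 0).
Proof.
apply/sub_kermxP/eqP => [uv0|uv0]; first by rewrite dot_mulmx_tr uv0 mxE.
by apply/matrixP => i j; rewrite !ord1 -dot_mulmx_tr uv0 mxE.
Qed.

Lemma sub_unit_antip a b : on_sphere a -> on_sphere b -> (a <= b)%MS -> antip a b.
Proof.
move=> aa bb /sub_rVP [c ac].
move: aa; rewrite /on_sphere ac dotZl dotZr bb mulr1 -expr2 => /eqP.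
by rewrite sqrf_eq1 => /orP[] /eqP ->; [left; rewrite scale1r | right; rewrite scaleN1r].
Qed.

Lemma antip_sub a b : antip a b -> (a <= b)%MS.
Proof. by case=> ->; rewrite ?submx_refl // -scaleN1r scalemx_sub. Qed.

Lemma unit_multiple a : a != 0 ->
  exists2 u, on_sphere u & (a <= u)%MS && (u <= a)%MS.
Proof.
move=> a0; have aa_gt0 : 0 < dot a a by rewrite lt_def dot_self_eq0 a0 dot_self_ge0.
have r_gt0 : 0 < Num.sqrt (dot a a) by rewrite sqrtr_gt0.
exists ((Num.sqrt (dot a a))^-1 *: a); last first.
  rewrite scalemx_sub // andbT; apply/sub_rVP; exists (Num.sqrt (dot a a)).
  by rewrite scalerA mulfV ?scale1r // gt_eqF.
rewrite /on_sphere dotZl dotZr mulrA -expr2 exprVn sqr_sqrtr ?mulVf //.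
- by rewrite gt_eqF.
- exact: ltW.
Qed.

End Dot.

Section OrthogonalPairs.
Variables (R : realType) (m : nat).
Local Notation vec := 'rV[R]_m.
Implicit Types (a b t : vec).

Definition orthn a b : nat := dot a b == 0.

Lemma orthnC a b : orthn a b = orthn b a.
Proof. by rewrite /orthn dotC. Qed.

Lemma orthn_le1 a b : (orthn a b <= 1)%N.
Proof. exact: leq_b1. Qed.

Lemma orthn1 a b : dot a b = 0 -> orthn a b = 1%N.
Proof. by rewrite /orthn => ->; rewrite eqxx. Qed.

Lemma orthn0 a b : dot a b != 0 -> orthn a b = 0%N.
Proof. by rewrite /orthn => /negbTE ->. Qed.

Lemma orthn_self a : a != 0 -> orthn a a = 0%N.
Proof. by rewrite -dot_self_eq0; apply: orthn0. Qed.

Variable n : nat.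
Implicit Types (z : 'I_n -> vec) (i j u v w : 'I_n).

Definition orth_deg z i := (\sum_j orthn (z i) (z j))%N.

Definition orth_pairs z := (\sum_i orth_deg z i)%N.

Definition orth_deg_off z v t := (\sum_(j | j != v) orthn t (z j))%N.

Definition update z v t := fun i => if i == v then t else z i.

Lemma orth_pairs_le z : (orth_pairs z <= n * n)%N.
Proof.
apply: (@leq_trans (\sum_(i < n) n)); last by rewrite sum_nat_const card_ord.
apply: leq_sum => i _; apply: (@leq_trans (\sum_(j < n) 1)); last by rewrite sum1_card card_ord.
by apply: leq_sum => j _; apply: orthn_le1.
Qed.

Lemma orth_deg_self z v : z v != 0 -> orth_deg z v = orth_deg_off z v (z v).
Proof. by move=> zv0; rewrite /orth_deg (bigD1 v) //= orthn_self. Qed.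

Lemma orth_deg_off_other z u v : u != v ->
  (orth_deg_off z v (z u) + orthn (z u) (z v) = orth_deg z u)%N.
Proof. by move=> uv; rewrite /orth_deg (bigD1 v) //= addnC. Qed.

Lemma orth_deg_off_nonorth z u v : u != v -> dot (z u) (z v) != 0 ->
  orth_deg_off z v (z u) = orth_deg z u.
Proof. by move=> uv uv0; rewrite -(orth_deg_off_other z uv) orthn0 ?addn0. Qed.

Lemma orth_pairs_split z v : z v != 0 ->
  orth_pairs z = (2 * orth_deg_off z v (z v)
                  + \sum_(i | i != v) \sum_(j | j != v) orthn (z i) (z j))%N.
Proof.
move=> zv0; rewrite /orth_pairs (bigD1 v) //= orth_deg_self //.
have -> : (\sum_(i | i != v) orth_deg z i = orth_deg_off z v (z v)
           + \sum_(i | i != v) \sum_(j | j != v) orthn (z i) (z j))%N.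
  rewrite /orth_deg_off -big_split; apply: eq_bigr => i _.
  by rewrite /orth_deg (bigD1 v) //= orthnC.
by rewrite addnA addnn mul2n.
Qed.

Lemma orth_deg_off_update z v t s : orth_deg_off (update z v t) v s = orth_deg_off z v s.
Proof. by apply: eq_bigr => j /negbTE jv; rewrite /update jv. Qed.

Lemma orth_pairs_update z v t : z v != 0 -> t != 0 ->
  (orth_pairs (update z v t) + 2 * orth_deg_off z v (z v)
   = orth_pairs z + 2 * orth_deg_off z v t)%N.
Proof.
move=> zv0 t0; have zv' : update z v t v = t by rewrite /update eqxx.
have off i : i != v -> update z v t i = z i by rewrite /update => /negbTE ->.
rewrite (orth_pairs_split zv0) (@orth_pairs_split _ v) zv' // orth_deg_off_update.
under eq_bigr => i /off -> do under eq_bigr => j /off -> do [].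
lia.
Qed.

Lemma orth_deg_update z v t i : i != v ->
  (orth_deg (update z v t) i + orthn (z i) (z v) = orth_deg z i + orthn (z i) t)%N.
Proof.
move=> iv; rewrite /orth_deg (bigD1 v) //= [in RHS](bigD1 v) //=.
rewrite /update eqxx (negbTE iv).
under eq_bigr => j /negbTE -> do [].
lia.
Qed.

Variable W : 'M[R]_m.

Definition nonzero_in z := forall i, z i != 0 /\ (z i <= W)%MS.

Definition orth_maximal z :=
  nonzero_in z /\ forall z', nonzero_in z' -> (orth_pairs z' <= orth_pairs z)%N.

Lemma nonzero_in_update z v t :
  nonzero_in z -> t != 0 -> (t <= W)%MS -> nonzero_in (update z v t).
Proof. by move=> zW t0 tW i; rewrite /update; case: (i == v); [split | apply: zW]. Qed.

Lemma exists_orth_maximal z : nonzero_in z -> exists z', orth_maximal z'.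
Proof.
move=> zW.
pose P := [pred s | `[< exists2 z', nonzero_in z' & orth_pairs z' = s >]].
have [|s /asboolP[z' _ <-]|s /asboolP[z' z'W <-] smax] := @ex_maxnP P (n * n).
- by exists (orth_pairs z); apply/asboolP; exists z.
- exact: orth_pairs_le.
by exists z'; split=> // z'' z''W; apply: smax; apply/asboolP; exists z''.
Qed.

Section Maximal.
Variable z : 'I_n -> vec.
Hypothesis zmax : orth_maximal z.

Let zW := zmax.1.
Let z_neq0 i : z i != 0 := (zW i).1.
Let z_sub i : (z i <= W)%MS := (zW i).2.

(* Zykov symmetrization: copying [z u] onto [z v] cannot gain orthogonal pairs. *)
Lemma orth_maximal_deg_le u v :
  u != v -> dot (z u) (z v) != 0 -> (orth_deg z u <= orth_deg z v)%N.
Proof.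
move=> uv uv0; have := orth_pairs_update (z_neq0 v) (z_neq0 u).
rewrite -orth_deg_self // orth_deg_off_nonorth //.
have := zmax.2 _ (nonzero_in_update v zW (z_neq0 u) (z_sub u)); lia.
Qed.

Lemma orth_maximal_deg_eq u v :
  dot (z u) (z v) != 0 -> orth_deg z u = orth_deg z v.
Proof.
have [-> //|uv uv0] := eqVneq u v; apply/eqP; rewrite eqn_leq !orth_maximal_deg_le //.
  by rewrite eq_sym.
by rewrite dotC.
Qed.

Lemma orth_maximal_copy u v :
  dot (z u) (z v) != 0 -> orth_maximal (update z u (z v)).
Proof.
move=> uv0; have [<-|uv] := eqVneq v u.
  by rewrite (_ : update z v (z v) = z) // /update; apply: funext => i; case: eqP => [->|].
have z1W := nonzero_in_update u zW (z_neq0 v) (z_sub v); split=> // z' z'W.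
have := orth_pairs_update (z_neq0 u) (z_neq0 v).
rewrite -orth_deg_self // orth_deg_off_nonorth 1?dotC // (orth_maximal_deg_eq uv0).
by have := zmax.2 _ z'W; lia.
Qed.

End Maximal.

Section MaximalStructure.
Variable z : 'I_n -> vec.
Hypothesis zmax : orth_maximal z.

Let zW := zmax.1.
Let z_neq0 i : z i != 0 := (zW i).1.
Let z_sub i : (z i <= W)%MS := (zW i).2.

(* After copying [z v] onto [z u], the degrees of [u] and [w] would differ by one. *)
Lemma orth_maximal_nonorth_trans u v w :
  dot (z u) (z v) != 0 -> dot (z v) (z w) != 0 -> dot (z u) (z w) != 0.
Proof.
move=> uv0 vw0; apply/negP => /eqP uw0.
have [eu|uv] := eqVneq u v; first by rewrite -eu uw0 eqxx in vw0.
have [ew|uw] := eqVneq u w.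
  by move: uw0; rewrite ew => /eqP; rewrite dot_self_eq0 (negbTE (z_neq0 w)).
pose z1 := update z u (z v).
have z1u : z1 u = z v by rewrite /z1 /update eqxx.
have z1w : z1 w = z w by rewrite /z1 /update eq_sym (negbTE uw).
have z1max := orth_maximal_copy zmax uv0.
have := orth_maximal_deg_eq z1max (_ : dot (z1 u) (z1 w) != 0); rewrite z1u z1w => /(_ vw0).
have vu : v != u by rewrite eq_sym.
have vu0 : dot (z v) (z u) != 0 by rewrite dotC.
rewrite orth_deg_self -/z1 ?z1u ?z_neq0 // orth_deg_off_update.
rewrite (orth_deg_off_nonorth vu vu0) (orth_maximal_deg_eq zmax vw0).
have wu : w != u by rewrite eq_sym.
have := orth_deg_update z (z v) wu.
by rewrite orthn1 1?dotC // orthn0 1?dotC // -/z1; lia.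
Qed.

(* Were [z u'] not parallel to [z u], replacing it by its component orthogonal to [z u]
   would gain orthogonal pairs. *)
Lemma orth_maximal_nonorth_parallel u u' :
  dot (z u) (z u') != 0 -> (z u' <= z u)%MS.
Proof.
move=> uu'0; apply/negPn/negP => nsub.
have [eu|uu'] := eqVneq u u'; first by rewrite eu submx_refl in nsub.
pose c := dot (z u') (z u) / dot (z u) (z u).
pose w := z u' - c *: z u.
have w0 : w != 0.
  apply: contra nsub => /eqP w0; apply/sub_rVP; exists c.
  by apply/eqP; rewrite -subr_eq0 -/w w0.
have wW : (w <= W)%MS by rewrite addmx_sub // -scaleNr scalemx_sub.
have wu : dot w (z u) = 0.
  by rewrite /w dotBl dotZl /c divfK ?subrr // dot_self_eq0.
have u'u : dot (z u') (z u) != 0 by rewrite dotC.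
have orth_w j : dot (z u') (z j) = 0 -> orthn w (z j) = 1%N.
  move=> u'j; apply: orthn1; rewrite /w dotBl dotZl u'j.
  have [uj|uj] := eqVneq (dot (z u) (z j)) 0; first by rewrite uj mulr0 subrr.
  by have := orth_maximal_nonorth_trans u'u uj; rewrite u'j eqxx.
have gain : (orth_deg_off z u' (z u') < orth_deg_off z u' w)%N.
  rewrite /orth_deg_off !(bigD1 u (_ : u != u')) //= (orthn1 wu) (orthn0 u'u).
  rewrite add0n add1n ltnS; apply: leq_sum => j _.
  by have [/orth_w ->|/orthn0 ->] := eqVneq (dot (z u') (z j)) 0; rewrite ?orthn_le1.
have := orth_pairs_update (z_neq0 u') w0.
have := zmax.2 _ (nonzero_in_update u' zW w0 wW); lia.
Qed.

Lemma orth_maximal_orth_or_parallel i j :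
  dot (z i) (z j) = 0 \/ (z j <= z i)%MS.
Proof.
have [|ij] := eqVneq (dot (z i) (z j)) 0; first by left.
by right; apply: orth_maximal_nonorth_parallel.
Qed.

End MaximalStructure.

End OrthogonalPairs.

Section AdaptedBasis.
Variables (R : realType) (m : nat).
Local Notation vec := 'rV[R]_m.

Definition orthonormal d (v : 'I_d -> vec) := forall i j, dot (v i) (v j) = (i == j)%:R.

Lemma orthonormal_onb_of d (W : 'M[R]_m) (v : 'I_d -> vec) :
  orthonormal v -> (forall j, (v j <= W)%MS) -> \rank W = d -> onb_of W v.
Proof.
move=> ov vW rW; split => //.
pose M := \matrix_(j < d) v j.
have MW : (M <= W)%MS by apply/row_subP => j; rewrite rowK.
have MMT : M *m M^T = 1%:M.
  by apply/matrixP => i j; rewrite !mxE -ov; apply: eq_bigr => k _; rewrite !mxE.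
have rM : \rank M = d.
  apply/eqP; rewrite eqn_leq rank_leq_row /= -{1}(mxrank1 R d) -MMT.
  exact: mxrankM_maxl.
by rewrite -(mxrank_leqif_eq MW).2 rM rW.
Qed.

Lemma onb_sub d (W : 'M[R]_m) (v : 'I_d -> vec) j : onb_of W v -> (v j <= W)%MS.
Proof. by case=> _ /andP[vW _]; apply: submx_trans vW; rewrite -(rowK v j) row_sub. Qed.

Lemma onb_unit d (W : 'M[R]_m) (v : 'I_d -> vec) j : onb_of W v -> on_sphere (v j).
Proof. by case=> ov _; rewrite /on_sphere ov eqxx. Qed.

Lemma sub_onb_antip d (W : 'M[R]_m) (v : 'I_d -> vec) (x : vec) a j :
  onb_of W v -> on_sphere x -> (x <= v a)%MS -> antip x (v j) <-> a = j.
Proof.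
move=> vonb xu /sub_rVP[c xE]; split=> [xvj|<-]; last first.
  by apply: sub_unit_antip xu (onb_unit _ vonb) _; rewrite xE scalemx_sub.
apply/eqP; apply: contraPT xvj => aj.
have vav : dot (v a) (v j) = 0 by rewrite vonb.1 (negbTE aj).
by case=> /(congr1 (fun w => dot w (v j))); rewrite ?dotNl xE dotZl vav mulr0
  (onb_unit _ vonb) => /eqP; rewrite eq_sym ?oppr_eq0 oner_eq0.
Qed.

Lemma orthonormal_lift d (u : vec) (v : 'I_d -> vec) :
  on_sphere u -> (forall j, dot (v j) u = 0) -> orthonormal v ->
  orthonormal (fun j : 'I_d.+1 => if unlift ord0 j is Some j' then v j' else u).
Proof.
move=> uu vu ov i j.
by case: (unliftP ord0 i) => [i'|] ->; case: (unliftP ord0 j) => [j'|] -> //=;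
  rewrite dotC vu.
Qed.

Lemma exists_nonzero_sub (W : 'M[R]_m) :
  \rank W != 0%N -> exists2 a : vec, a != 0 & (a <= W)%MS.
Proof.
rewrite mxrank_eq0; case: (pickP (fun i => row i W != 0)) => [i Wi _|W0].
  by exists (row i W); rewrite ?row_sub.
by case/negP; apply/eqP/row_matrixP => i; rewrite row0; apply/eqP/negbFE/W0.
Qed.

Lemma mxrank_cap_orth (W : 'M[R]_m) (u : vec) : (u <= W)%MS -> on_sphere u ->
  \rank (W :&: kermx u^T)%MS = (\rank W).-1.
Proof.
move=> uW uu; set K := kermx u^T.
have rK : \rank K = m.-1 by rewrite mxrank_ker mxrank_tr rank_rV dot_self1_neq0 // subn1.
have uK : ~~ (u <= K)%MS by rewrite sub_kermx_tr uu oner_eq0.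
have KWK : (K < W + K)%MS.
  rewrite ltmxE addsmxSr /=; apply: contra uK => WKK.
  exact: submx_trans uW (submx_trans (addsmxSl _ _) WKK).
have rWK : \rank (W + K)%MS = m.
  have := rank_leq_col (W + K)%MS; move: KWK; rewrite ltmxErank => /andP[_].
  by rewrite rK; lia.
have := mxrank_sum_cap W K; rewrite rWK rK.
have := rank_leq_col u; rewrite rank_rV dot_self1_neq0 //; lia.
Qed.

Lemma exists_pivot (W : 'M[R]_m) (s : seq vec) : \rank W != 0%N ->
  {in s, forall a, a != 0 /\ (a <= W)%MS} ->
  {in s &, forall a b, dot a b = 0 \/ (b <= a)%MS} ->
  exists a0 : vec, [/\ a0 != 0, (a0 <= W)%MS &
    {in s, forall a, dot a0 a = 0 \/ (a <= a0)%MS}].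
Proof.
case: s => [|a s] rW sW spw; last first.
  have [a0 aW] := sW a (mem_head _ _).
  by exists a; split => // b bs; apply: spw; rewrite ?mem_head.
by have [a a0 aW] := exists_nonzero_sub rW; exists a; split.
Qed.

(* Normalize a pivot [a0]: the members of [s] not orthogonal to it are parallel to it,
   the others lie in [W :&: a0^perp], where the rest of the basis is found by induction. *)
Lemma onb_adapted d (W : 'M[R]_m) (s : seq vec) : \rank W = d ->
  {in s, forall a, a != 0 /\ (a <= W)%MS} ->
  {in s &, forall a b, dot a b = 0 \/ (b <= a)%MS} ->
  exists v : 'I_d -> vec, onb_of W v /\ {in s, forall a, exists j, (a <= v j)%MS}.
Proof.
elim: d W s => [|d IH] W s rW sW spw.
  have W0 : W = 0 by apply/eqP; rewrite -mxrank_eq0 rW.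
  exists (fun _ => 0); split; first by apply: orthonormal_onb_of => // - [].
  by move=> a /sW[a0]; rewrite W0 submx0 (negbTE a0).
have [|a0 [a00 a0W a0s]] := exists_pivot (_ : \rank W != 0%N) sW spw; first by rewrite rW.
have [u uu /andP[a0u ua0]] := unit_multiple a00.
have uW : (u <= W)%MS := submx_trans ua0 a0W.
pose W' := (W :&: kermx u^T)%MS.
have rW' : \rank W' = d by rewrite mxrank_cap_orth // rW.
pose s' := [seq b <- s | dot u b == 0].
have s'W : {in s', forall a, a != 0 /\ (a <= W')%MS}.
  move=> a; rewrite mem_filter => /andP[/eqP ua /sW[a_neq0 aW]].
  by rewrite sub_capmx aW sub_kermx_tr dotC ua eqxx.
have s'pw : {in s' &, forall a b, dot a b = 0 \/ (b <= a)%MS}.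
  by move=> a b; rewrite !mem_filter => /andP[_ ?] /andP[_ ?]; apply: spw.
have [v' [ov' ad']] := IH W' s' rW' s'W s'pw.
have v'W' j : (v' j <= W')%MS := onb_sub j ov'.
have v'u j : dot (v' j) u = 0.
  by apply/eqP; rewrite -sub_kermx_tr (submx_trans (v'W' j)) ?capmxSr.
exists (fun j : 'I_d.+1 => if unlift ord0 j is Some j' then v' j' else u); split.
  apply: orthonormal_onb_of => // [|j]; first exact: orthonormal_lift ov'.1.
  case: unliftP => [j'|] _ //; exact: submx_trans (v'W' j') (capmxSl _ _).
move=> a as_; have [ua|ua] := eqVneq (dot u a) 0.
  have [|j' aj'] := ad' a; first by rewrite mem_filter ua eqxx.
  by exists (lift ord0 j'); rewrite liftK.
exists ord0; rewrite unlift_none.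
case: (a0s a as_) => [a0a|aa0]; last exact: submx_trans aa0 a0u.
have /sub_rVP[c uc] := ua0.
by move: ua; rewrite uc dotZl a0a mulr0 eqxx.
Qed.

Lemma exists_onb d (W : 'M[R]_m) : \rank W = d -> exists v : 'I_d -> vec, onb_of W v.
Proof.
move=> rW; have [||v [ov _]] := @onb_adapted d W [::] rW; last by exists v.
  by move=> a; rewrite in_nil.
by move=> a b; rewrite in_nil.
Qed.

End AdaptedBasis.

Section NearEqual.
Local Open Scope nat_scope.

Definition near_equal d (c : 'I_d -> nat) := forall a b, c a <= (c b).+1.

(* The sum of squares of the parts of the balanced split of [n] into [d] parts:
   [n %% d] parts equal to [n %/ d + 1], the others equal to [n %/ d]. *)
Definition balanced_sqsum (n d : nat) := d * (n %/ d * (n %/ d)) + (2 * (n %/ d) + 1) * (n %% d).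

Section Parts.
Variables (d n : nat) (c : 'I_d -> nat).
Hypotheses (d_gt0 : (0 < d)) (c_near : near_equal c) (c_sum : (\sum_j c j) = n).

Lemma near_equal_parts :
  (forall j, c j = n %/ d \/ c j = (n %/ d).+1) /\
  (\sum_j (c j == (n %/ d).+1 : nat)) = n %% d.
Proof.
have c_attained : exists t, [exists j, c j == t].
  by exists (c (Ordinal d_gt0)); apply/existsP; exists (Ordinal d_gt0).
have [q /existsP[j1 /eqP cj1] qmin] := ex_minnP c_attained.
have qc j : c j = q \/ c j = q.+1.
  have : (q <= c j) by apply: qmin; apply/existsP; exists j.
  by have := c_near j j1; rewrite cj1; lia.
pose t := (\sum_j (c j == q.+1 : nat)).
have n_qt : n = (q * d + t).
  have -> : q * d = \sum_(j < d) q by rewrite sum_nat_const card_ord mulnC.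
  rewrite -c_sum -big_split /=.
  by apply: eq_bigr => j _; case: (qc j) => ->; rewrite ?eqxx ?addn1 //; case: eqP; lia.
have t_lt : (t < d).
  rewrite /t (bigD1 j1) //= cj1 (_ : (q == q.+1) = false) ?add0n; last by lia.
  apply: (@leq_ltn_trans (\sum_(j | j != j1) 1)); first by apply: leq_sum => j _; case: eqP.
  by rewrite sum1_card cardC1 card_ord; lia.
have q_eq : n %/ d = q by rewrite n_qt divnMDl // divn_small // addn0.
by rewrite q_eq n_qt modnMDl modn_small.
Qed.

Lemma near_equal_sqsum : (\sum_j c j * c j) = balanced_sqsum n d.
Proof.
have [cj cs] := near_equal_parts; rewrite /balanced_sqsum.
have -> : d * (n %/ d * (n %/ d)) = \sum_(j < d) n %/ d * (n %/ d).
  by rewrite sum_nat_const card_ord.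
rewrite -cs big_distrr /= -big_split /=.
by apply: eq_bigr => j _; case: (cj j) => ->; rewrite ?eqxx ?(ltn_eqF (ltnSn _)) /=; lia.
Qed.

End Parts.

Lemma balanced_sqsumS d n : (0 < d) ->
  balanced_sqsum n.+1 d = (balanced_sqsum n d + 2 * (n %/ d) + 1).
Proof.
move=> d_gt0; rewrite /balanced_sqsum divnS // modnS.
have := divn_eq n d; have := ltn_pmod n d_gt0.
have [dvd|_] := boolP (d %| n.+1) => /= nd_lt nE; last by nia.
have := divn_eq n.+1 d; rewrite (eqP dvd) addn0 divnS // dvd => n1E.
have -> : n %% d = d.-1 by nia.
nia.
Qed.

Lemma balanced_sqsum_addn d k t : (0 < d) ->
  (balanced_sqsum k d + t * (2 * (k %/ d) + 1) <= balanced_sqsum (k + t) d).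
Proof.
move=> d_gt0; elim: t => [|t IH]; first by rewrite addn0 mul0n addn0.
rewrite (addnS k t) balanced_sqsumS //.
have : (k %/ d <= (k + t) %/ d) by apply: leq_div2r; lia.
nia.
Qed.

End NearEqual.

Section Fibers.
Local Open Scope nat_scope.
Variables n d : nat.
Implicit Type f : 'I_n -> 'I_d.

Definition nfiber f j := (\sum_i (f i == j : nat)).

Definition balanced f := near_equal (nfiber f).

Lemma sum_over_fibers f (g : 'I_d -> nat) :
  (\sum_i g (f i) = \sum_j g j * nfiber f j).
Proof.
have -> : \sum_i g (f i) = \sum_i \sum_j (f i == j) * g j.
  apply: eq_bigr => i _; rewrite (bigD1 (f i)) //= eqxx mul1n big1 ?addn0 // => j.
  by rewrite eq_sym => /negbTE ->.
rewrite exchange_big; apply: eq_bigr => j _; rewrite /nfiber big_distrr /=.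
by apply: eq_bigr => i _; rewrite mulnC.
Qed.

Lemma sum_nfiber f : (\sum_j nfiber f j = n).
Proof.
have := sum_over_fibers f (fun _ => 1); rewrite sum1_card card_ord => ->.
by apply: eq_bigr => j _; rewrite mul1n.
Qed.

Lemma nfiber_compl f b : (\sum_i (f i != b : nat) + nfiber f b = n).
Proof.
rewrite /nfiber -big_split /= -[RHS]card_ord -sum1_card.
by apply: eq_bigr => i _; case: (f i == b).
Qed.

Lemma nfiber_gt0 f a : (0 < nfiber f a) -> exists i, f i = a.
Proof.
rewrite lt0n sum_nat_eq0 => /forallPn[i]; rewrite implyTb eqb0 negbK => /eqP.
by exists i.
Qed.

Definition ord_mod (d_gt0 : (0 < d)) : 'I_n -> 'I_d :=
  fun i => Ordinal (ltn_pmod i d_gt0).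

Lemma nfiber_ord_mod (d_gt0 : (0 < d)) j :
  nfiber (ord_mod d_gt0) j = (n %/ d + (j < n %% d)).
Proof.
rewrite /nfiber /ord_mod.
under eq_bigr => i _ do rewrite -val_eqE /=.
rewrite -(big_mkord xpredT (fun i => (i %% d == j : nat))).
elim: n => [|k IH]; first by rewrite big_geq // div0n mod0n.
rewrite big_nat_recr //= IH divnS // modnS.
have := ltn_pmod k d_gt0; have := ltn_ord j; have := divn_eq k d.
have [dvd|] := boolP (d %| k.+1) => /= ? ? ?; last first.
  by case: (@eqP _ (k %% d) j) => ?; case: (ltngtP j (k %% d)) => ?; lia.
have := divn_eq k.+1 d; rewrite (eqP dvd) addn0 divnS // dvd => ?.
have kd : k %% d = d.-1 by nia.
by rewrite kd; case: (@eqP _ d.-1 j) => ?; case: (ltngtP j d.-1) => ?; lia.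
Qed.

Lemma ord_mod_balanced (d_gt0 : (0 < d)) : balanced (ord_mod d_gt0).
Proof. by move=> a b; rewrite !nfiber_ord_mod; case: (_ < _); case: (_ < _); lia. Qed.

End Fibers.

Section Aligned.
Variables (R : realType) (m n d : nat) (W : 'M[R]_m).
Local Notation vec := 'rV[R]_m.

Definition aligned (v : 'I_d -> vec) (f : 'I_n -> 'I_d) (z : 'I_n -> vec) :=
  onb_of W v /\ forall i, z i != 0 /\ (z i <= v (f i))%MS.

Variables (v : 'I_d -> vec) (f : 'I_n -> 'I_d) (z : 'I_n -> vec).
Hypothesis zal : aligned v f z.

Lemma aligned_scale i : exists2 a, a != 0 & z i = a *: v (f i).
Proof.
have [z0 /sub_rVP[a za]] := zal.2 i; exists a => //.
by apply: contraNneq z0 => a0; rewrite za a0 scale0r.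
Qed.

Lemma aligned_orthn_basis b j : orthn (v b) (z j) = (f j != b).
Proof.
have [a a0 ->] := aligned_scale j; rewrite /orthn dotZr zal.1.1 (eq_sym b).
by case: (f j == b); rewrite /= ?mulr1 ?mulr0 ?eqxx // (negbTE a0).
Qed.

Lemma aligned_orthn i j : orthn (z i) (z j) = (f i != f j).
Proof.
have [a a0 ->] := aligned_scale i.
by rewrite /orthn dotZl mulf_eq0 (negbTE a0) /= -/(orthn _ _) aligned_orthn_basis eq_sym.
Qed.

Lemma aligned_orth_deg i : (orth_deg z i + nfiber f (f i) = n)%N.
Proof.
apply: etrans (nfiber_compl f (f i)); congr (_ + _)%N.
by apply: eq_bigr => j _; rewrite aligned_orthn eq_sym.
Qed.

Lemma orth_pairs_aligned : (orth_pairs z + \sum_j nfiber f j * nfiber f j = n * n)%N.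
Proof.
have -> : (n * n = \sum_(i < n) n)%N by rewrite sum_nat_const card_ord.
rewrite -sum_over_fibers /orth_pairs -big_split /=.
by apply: eq_bigr => i _; apply: aligned_orth_deg.
Qed.

End Aligned.

Section OrthPairsBound.
Variables (R : realType) (m n d : nat) (W : 'M[R]_m).
Hypotheses (rW : \rank W = d) (d_gt0 : (0 < d)%N).
Local Notation vec := 'rV[R]_m.
Implicit Types (z : 'I_n -> vec) (v : 'I_d -> vec) (f : 'I_n -> 'I_d).

Lemma orth_maximal_balanced z v f :
  orth_maximal W z -> aligned W v f z -> balanced f.
Proof.
move=> [zW zmax] zal a b; rewrite leqNgt; apply/negP => ab_lt.
have ab : a != b by apply: contraTneq ab_lt => ->; rewrite ltnNge leqnSn.
have [u fu] := nfiber_gt0 (leq_ltn_trans (leq0n _) ab_lt).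
have vb0 : v b != 0 by rewrite dot_self1_neq0 ?(onb_unit b zal.1).
have := orth_pairs_update (zW u).1 vb0.
have := zmax _ (nonzero_in_update u zW vb0 (onb_sub b zal.1)).
rewrite -orth_deg_self ?(zW u).1 //.
have := aligned_orth_deg zal u; rewrite fu.
have : (1 + orth_deg_off z u (v b) + nfiber f b = n)%N.
  apply: etrans (nfiber_compl f b); rewrite [in RHS](bigD1 u) //= fu ab.
  by congr (_ + _ + _)%N; apply: eq_bigr => j _; rewrite (aligned_orthn_basis zal).
lia.
Qed.

Lemma orth_maximal_aligned z :
  orth_maximal W z -> exists v f, aligned W v f z /\ balanced f.
Proof.
move=> zmax; have zW := zmax.1.
have [v [vW zv]] : exists v : 'I_d -> vec, onb_of W v /\
    {in codom z, forall a, exists j, (a <= v j)%MS}.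
  apply: onb_adapted => // [_ /codomP[i ->]|_ _ /codomP[i ->] /codomP[j ->]].
    exact: zW.
  exact: orth_maximal_orth_or_parallel zmax i j.
have /fin_all_exists[f zf] : forall i, exists j, (z i <= v j)%MS.
  by move=> i; apply: zv; apply: codom_f.
have zal : aligned W v f z by split=> // i; split; [apply: (zW i).1 | apply: zf].
by exists v, f; split; last exact: orth_maximal_balanced zal.
Qed.

Lemma orth_pairs_aligned_balanced z v f :
  aligned W v f z -> balanced f -> (orth_pairs z + balanced_sqsum n d = n * n)%N.
Proof.
move=> zal fbal; rewrite -(orth_pairs_aligned zal).
by rewrite (near_equal_sqsum d_gt0 fbal (sum_nfiber f)).
Qed.

Lemma orth_pairs_bound z :
  nonzero_in W z -> (orth_pairs z + balanced_sqsum n d <= n * n)%N.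
Proof.
move=> zW; have [z' z'max] := exists_orth_maximal zW.
have [v [f [z'al fbal]]] := orth_maximal_aligned z'max.
have := orth_pairs_aligned_balanced z'al fbal; have := z'max.2 _ zW; lia.
Qed.

Lemma orth_pairs_bound_eq z :
  nonzero_in W z -> (orth_pairs z + balanced_sqsum n d = n * n)%N ->
  exists v f, aligned W v f z /\ balanced f.
Proof.
move=> zW zeq; apply: orth_maximal_aligned; split=> // z' z'W.
by have := orth_pairs_bound z'W; lia.
Qed.

End OrthPairsBound.

Lemma card_set_nat n (P : pred 'I_n) : #|[set i | P i]| = (\sum_i (P i : nat))%N.
Proof. by rewrite -sum1dep_card big_mkcond /=; apply: eq_bigr => i _; case: (P i). Qed.

Lemma perm_of_same_counts (T : eqType) n (f g : 'I_n -> T) :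
  (forall t, \sum_i (f i == t : nat) = \sum_i (g i == t : nat))%N ->
  exists s : 'S_n, forall i, f (s i) = g i.
Proof.
move=> fg.
have count_tuple (h : 'I_n -> T) t : count_mem t [tuple h i | i < n] = (\sum_i (h i == t : nat))%N.
  rewrite /= -sum1_count big_map big_enum_cond /= big_mkcond /=.
  by apply: eq_bigr => i _; rewrite eq_sym; case: (h i == t).
have /tuple_permP[s gfs] : perm_eq [tuple g i | i < n] [tuple f i | i < n].
  by apply/allP => t _ /=; rewrite !count_tuple fg.
exists s => i; have /(congr1 (fun t : n.-tuple T => tnth t i)) : [tuple g i | i < n] =
    [tuple tnth [tuple f i | i < n] (s i) | i < n] by apply: val_inj.
by rewrite !tnth_mktuple => ->.
Qed.

Section Einf.
Variables (R : realType) (m N : nat).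
Implicit Types x y : 'I_N -> 'rV[R]_m.

Lemma Einf_orth_pairs x : Einf x = 2^-1 * (orth_pairs x)%:R.
Proof.
rewrite /Einf /orth_pairs natr_sum; congr (_ * _); apply: eq_bigr => i _.
by rewrite /orth_deg natr_sum; apply: eq_bigr => j _; rewrite /Lam /orthn; case: eqP.
Qed.

Lemma Einf_le x y : (Einf x <= Einf y) = (orth_pairs x <= orth_pairs y)%N.
Proof. by rewrite !Einf_orth_pairs ler_pM2l ?invr_gt0 ?ltr0n // ler_nat. Qed.

Lemma orth_pairs_perm x (s : 'S_N) : orth_pairs (fun i => x (s i)) = orth_pairs x.
Proof.
rewrite /orth_pairs [in RHS](reindex_inj (@perm_inj _ s)); apply: eq_bigr => i _.
by rewrite /orth_deg [in RHS](reindex_inj (@perm_inj _ s)).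
Qed.

Lemma dirac_sum_permP x y :
  dirac_sum x = dirac_sum y <-> exists s : 'S_N, forall i, x (s i) = y i.
Proof.
split=> [xy|[s xsy]]; last first.
  apply: funext => A; rewrite /dirac_sum !card_set_nat (reindex_inj (@perm_inj _ s)).
  by apply: eq_bigr => i _; rewrite xsy.
have count_eq z t : dirac_sum z (fun w => w = t) = (\sum_i (z i == t : nat))%N.
  rewrite /dirac_sum card_set_nat; apply: eq_bigr => i _.
  by rewrite (asbool_equiv_eqP (@eqP _ (z i) t)).
by apply: perm_of_same_counts => t; rewrite -!count_eq xy.
Qed.

End Einf.

Section BalancedPerm.
Local Open Scope nat_scope.

Lemma near_equal_same_counts d n (c c' : 'I_d -> nat) : 0 < d ->
  near_equal c -> \sum_j c j = n -> near_equal c' -> \sum_j c' j = n ->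
  forall t, \sum_j (c j == t : nat) = \sum_j (c' j == t : nat).
Proof.
move=> d_gt0 c_near c_sum c'_near c'_sum t; set q := n %/ d.
have [cq cq1] := near_equal_parts d_gt0 c_near c_sum.
have [c'q c'q1] := near_equal_parts d_gt0 c'_near c'_sum.
have two_values (e : 'I_d -> nat) : (forall j, e j = q \/ e j = q.+1) ->
    \sum_j (e j == q : nat) + \sum_j (e j == q.+1 : nat) = d.
  move=> eq; rewrite -big_split -[RHS]card_ord -sum1_card; apply: eq_bigr => j _.
  by case: (eq j) => ->; rewrite eqxx ?(gtn_eqF (ltnSn q)) ?(ltn_eqF (ltnSn q)).
have [->|tq1] := eqVneq t q.+1; first by rewrite cq1 c'q1.
have [->|tq] := eqVneq t q.
  by have := two_values c cq; have := two_values c' c'q; rewrite cq1 c'q1; lia.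
rewrite !big1 // => j _; [case: (c'q j) | case: (cq j)] => ->;
  by rewrite eq_sym ?(negbTE tq) ?(negbTE tq1).
Qed.

Lemma balanced_perm n d (f g : 'I_n -> 'I_d) : 0 < d -> balanced f -> balanced g ->
  exists (s : 'S_n) (t : 'S_d), forall i, f (s i) = t (g i).
Proof.
move=> d_gt0 fbal gbal.
have [t ft] := perm_of_same_counts (near_equal_same_counts d_gt0 fbal (sum_nfiber f)
  gbal (sum_nfiber g)).
have [s fs] : exists s : 'S_n, forall i, f (s i) = t (g i).
  apply: perm_of_same_counts => a.
  have -> : \sum_i (t (g i) == a : nat) = nfiber g ((t^-1)%g a).
    by apply: eq_bigr => i _; rewrite -{1}(permKV t a) (inj_eq (@perm_inj _ t)).
  by rewrite -ft permKV.
by exists s, t.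
Qed.

End BalancedPerm.

Lemma in_MN_nonzero_in (R : realType) m n (W : 'M[R]_m) (z : 'I_n -> 'rV[R]_m) :
  in_MN z -> (forall i, (z i <= W)%MS) -> nonzero_in W z.
Proof. by move=> zu zW i; split; [apply: dot_self1_neq0 (zu i) | apply: zW]. Qed.

Section WholeSpace.
Variables (R : realType) (D N : nat).
Local Notation vec := 'rV[R]_D.+1.

Let D_gt0 : (0 < D.+1)%N := ltn0Sn D.
Let rank1 : \rank (1%:M : 'M[R]_D.+1) = D.+1 := mxrank1 R D.+1.
Let g := @ord_mod N _ D_gt0.
Let g_bal : balanced g := @ord_mod_balanced N _ D_gt0.

Let nonzero_in1 (z : 'I_N -> vec) : in_MN z -> nonzero_in 1%:M z.
Proof. by move=> zu; apply: in_MN_nonzero_in => // i; apply: submx1. Qed.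

Lemma maximizes_in_MN_value (x : 'I_N -> vec) : in_MN x ->
  maximizes (@in_MN R D.+1 N) x <-> (orth_pairs x + balanced_sqsum N D.+1 = N * N)%N.
Proof.
move=> xu; have x_le := orth_pairs_bound rank1 D_gt0 (nonzero_in1 xu).
split=> [[_ xmax]|x_eq]; last first.
  split=> // z zu; rewrite Einf_le.
  by have := orth_pairs_bound rank1 D_gt0 (nonzero_in1 zu); lia.
have [e eonb] := exists_onb rank1.
have eal : aligned 1%:M e g (fun i => e (g i)).
  by split=> // i; split; [apply: dot_self1_neq0 (onb_unit _ eonb) | apply: submx_refl].
have := orth_pairs_aligned_balanced D_gt0 eal g_bal.
by have := xmax (fun i => e (g i)) (fun i => onb_unit _ eonb); rewrite Einf_le; lia.
Qed.

Lemma maximizes_in_MNP (x : 'I_N -> vec) :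
  maximizes (@in_MN R D.+1 N) x <->
  exists (v : 'I_D.+1 -> vec) (y : 'I_N -> vec),
    [/\ onb_of 1%:M v, in_MN y, dirac_sum x = dirac_sum y &
        forall (i : 'I_N) (j : 'I_D.+1), (i %% D.+1 = j)%N -> antip (y i) (v j)].
Proof.
split=> [xmax|[v [y [vonb yu /dirac_sum_permP[s xsy] yv]]]].
  have xu := xmax.1; move/(maximizes_in_MN_value xu): xmax => x_eq.
  have [v [f [xal fbal]]] := orth_pairs_bound_eq rank1 D_gt0 (nonzero_in1 xu) x_eq.
  have [s [t fst]] := balanced_perm D_gt0 fbal g_bal.
  exists (fun j => v (t j)), (fun i => x (s i)); split => [||//|i j ij].
  - apply: orthonormal_onb_of => [i j|j|]; rewrite ?submx1 ?mxrank1 //.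
    by rewrite xal.1.1 (inj_eq (@perm_inj _ t)).
  - by move=> i; apply: xu.
  - by apply/dirac_sum_permP; exists s.
  - have <- : g i = j by apply: val_inj.
    by apply/(sub_onb_antip _ xal.1 (xu _) (xal.2 (s i)).2).
have xu : in_MN x by move=> i; rewrite -(permKV s i) xsy.
have yal : aligned 1%:M v g y.
  by split=> // i; split; [apply: dot_self1_neq0 (yu i) | apply/antip_sub/yv].
apply/(maximizes_in_MN_value xu); rewrite -(orth_pairs_perm x s).
have -> : (fun i => x (s i)) = y by apply: funext.
exact: (orth_pairs_aligned_balanced D_gt0 yal g_bal).
Qed.

End WholeSpace.

Section Restrict.
Variables (T : Type) (n : nat) (P : {set 'I_n}).

Definition restrict (z : 'I_n -> T) : 'I_#|P| -> T := fun t => z (enum_val t).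

Lemma sum_restrict (F : 'I_n -> nat) :
  (\sum_(t < #|P|) F (enum_val t) = \sum_i (i \in P) * F i)%N.
Proof.
rewrite -(big_enum_val F) big_mkcond /=.
by apply: eq_bigr => i _; case: (i \in P); rewrite ?mul1n ?mul0n.
Qed.

End Restrict.

Arguments restrict {T n} P z.
Arguments sum_restrict {n} P F.

Lemma orth_pairs_restrict (R : realType) m n (P : {set 'I_n}) (z : 'I_n -> 'rV[R]_m) :
  orth_pairs (restrict P z) =
  (\sum_i \sum_j ((i \in P) && (j \in P)) * orthn (z i) (z j))%N.
Proof.
rewrite /orth_pairs /orth_deg /restrict.
rewrite (sum_restrict P (fun i => \sum_(t < #|P|) orthn (z i) (z (enum_val t))))%N.
apply: eq_bigr => i _; rewrite (sum_restrict P (fun j => orthn (z i) (z j))) big_distrr /=.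
by apply: eq_bigr => j _; case: (i \in P); case: (j \in P); rewrite ?mul1n ?mul0n.
Qed.

Section BoolSums.
Local Open Scope nat_scope.
Variable n : nat.
Implicit Types u w : pred 'I_n.

Lemma sum_andb u w :
  \sum_(i < n) \sum_(j < n) (u i && w j : nat) =
  (\sum_(i < n) (u i : nat)) * (\sum_(j < n) (w j : nat)).
Proof.
rewrite big_distrl /=; apply: eq_bigr => i _; rewrite big_distrr /=.
by apply: eq_bigr => j _; case: (u i); case: (w j).
Qed.

Lemma sum_andb_neq u :
  \sum_(i < n) \sum_(j < n) (u i && u j && (i != j) : nat) + \sum_(i < n) (u i : nat) =
  (\sum_(i < n) (u i : nat)) * (\sum_(j < n) (u j : nat)).
Proof.
rewrite -sum_andb -big_split /=; apply: eq_bigr => i _.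
rewrite [in RHS](bigD1 i) //= [X in X + _](bigD1 i) //= eqxx andbF add0n addnC.
congr (_ + _); first by case: (u i).
by apply: eq_bigr => j ji; rewrite eq_sym ji andbT.
Qed.

Lemma sum_negb u : \sum_(i < n) (~~ u i : nat) + \sum_(i < n) (u i : nat) = n.
Proof.
rewrite -big_split -[RHS]card_ord -sum1_card /=.
by apply: eq_bigr => i _; case: (u i).
Qed.

End BoolSums.

Lemma pole_bound_arith S SP Qk Qks k s q N r : (S <= SP + (s * s - s) + 2 * q * k ->
  SP + Qks <= (k + s) * (k + s) -> Qk + s * (2 * r + 1) <= Qks -> s <= r ->
  k + s + q = N -> S + Qk + 2 * s <= k * k + 2 * k * (N - k))%N.
Proof.
move=> le_S le_SP le_Q s_le kN.
have : (s * s <= s * r)%N by apply: leq_mul.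
nia.
Qed.

Section CeilFloor.
Local Open Scope nat_scope.

Lemma ceil_divE k d : 0 < d -> ceil_div k d = k %/ d + (0 < k %% d).
Proof.
move=> d_gt0; rewrite /ceil_div {1}(divn_eq k d) -addnA divnMDl //; congr (_ + _).
have := ltn_pmod k d_gt0; case: posnP => [->|r_gt0] r_lt.
  by rewrite add0n divn_small // prednK.
rewrite -(prednK r_gt0) addSnnS prednK // addnC -[X in X + _]mul1n divnMDl //.
by rewrite divn_small ?addn0 //; lia.
Qed.

Lemma near_equal_ceil_floor d k (c : 'I_d -> nat) : 0 < d -> \sum_j c j = k ->
  near_equal c <-> forall j, c j = ceil_div k d \/ c j = k %/ d.
Proof.
move=> d_gt0 c_sum; rewrite ceil_divE //; split=> [c_near j|c_cf a b].
  have [c_parts c_top] := near_equal_parts d_gt0 c_near c_sum.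
  case: (c_parts j) => cj; [by right | left].
  suff -> : 0 < k %% d by rewrite addn1.
  by rewrite -c_top (bigD1 j) //= cj eqxx.
by case: (c_cf a) => ->; case: (c_cf b) => ->; case: (0 < k %% d) => /=; lia.
Qed.

End CeilFloor.

Section AntipodalClasses.
Variables (R : realType) (m N d : nat) (V : 'M[R]_m) (x : 'I_N -> 'rV[R]_m).
Hypothesis xu : in_MN x.
Local Notation A := [set i | (x i <= V)%MS].

Lemma card_antip_aligned (v : 'I_d -> 'rV[R]_m) (f : 'I_#|A| -> 'I_d) :
  onb_of V v -> (forall t, (x (enum_val t) <= v (f t))%MS) ->
  forall j, #|[set i | `[< antip (x i) (v j) >]]| = nfiber f j.
Proof.
move=> vonb xv j; rewrite card_set_nat /nfiber.
under [RHS]eq_bigr => t _.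
  rewrite -(asbool_equiv_eqP eqP (sub_onb_antip j vonb (xu _) (xv t))).
  over.
rewrite (sum_restrict A (fun i => `[< antip (x i) (v j) >] : nat)).
apply: eq_bigr => i _; rewrite inE.
have [xiV|xiV] := boolP (x i <= V)%MS; first by rewrite mul1n.
rewrite mul0n asboolF // => /antip_sub xvj.
by move/negP: xiV; apply; apply: submx_trans xvj (onb_sub _ vonb).
Qed.

End AntipodalClasses.

Section Pole.
Variables (R : realType) (D : nat) (V : 'M[R]_D.+1) (p : 'rV[R]_D.+1).
Hypotheses (rV : \rank V = D) (pV : forall u, (u <= V)%MS -> dot u p = 0)
  (pu : on_sphere p) (D_gt0 : (0 < D)%N).
Local Notation vec := 'rV[R]_D.+1.
Implicit Types y w : vec.

Lemma sub_V_dotE w : (w <= V)%MS = (dot w p == 0).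
Proof.
apply/idP/eqP => [/pV //|wp]; apply: contraTT isT => wV.
have VVw : (V < V + w)%MS.
  by rewrite ltmxE addsmxSl /=; apply: contra wV; apply: submx_trans (addsmxSr _ _).
have full : row_full (V + w)%MS.
  move: VVw; rewrite ltmxErank rV => /andP[_].
  by rewrite /row_full eqn_leq rank_leq_col.
have /sub_addsmxP[u pE] := submx_full p full.
move: pu; rewrite /on_sphere {1}pE dotDl pV ?submxMl // add0r (mx11_scalar u.2).
by rewrite mul_scalar_mx dotZl wp mulr0 => /eqP; rewrite eq_sym oner_eq0.
Qed.

Lemma pole_notin_V : ~~ (p <= V)%MS.
Proof. by rewrite sub_V_dotE pu oner_eq0. Qed.

Definition projV y := y - dot y p *: p.

Lemma dot_projV_pole y : dot (projV y) p = 0.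
Proof. by rewrite /projV dotBl dotZl pu mulr1 subrr. Qed.

Lemma projV_sub y : (projV y <= V)%MS.
Proof. by rewrite sub_V_dotE dot_projV_pole. Qed.

Lemma projV_id y : (y <= V)%MS -> projV y = y.
Proof. by rewrite sub_V_dotE /projV => /eqP ->; rewrite scale0r subr0. Qed.

Lemma dot_projV y y' : dot y y' = dot (projV y) (projV y') + dot y p * dot y' p.
Proof.
have yE z : z = projV z + dot z p *: p by rewrite /projV subrK.
rewrite {1}(yE y) {1}(yE y'); move: (dot_projV_pole y) (dot_projV_pole y').
move: (projV y) (projV y') => a b ap bp.
rewrite !dotDl !dotDr !dotZl !dotZr ap (dotC p b) bp pu; ring.
Qed.

Lemma projV_eq0 y : on_sphere y -> projV y = 0 <-> antip y p.
Proof.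
move=> yu; split=> [y0|[]->]; last 2 first.
- by rewrite /projV pu scale1r subrr.
- by rewrite /projV dotNl pu scaleNr scale1r opprK addrC subrr.
apply: sub_unit_antip => //; apply/sub_rVP; exists (dot y p).
by apply/eqP; rewrite -subr_eq0 -/(projV y) y0.
Qed.

Section Classes.
Variables (N : nat) (y : 'I_N -> 'rV[R]_D.+1).
Hypothesis yu : in_MN y.

Local Notation equatorial := [set i | (y i <= V)%MS].
Local Notation nonpolar := [set i | projV (y i) != 0].

(* The points off [V] split into polar ones, i.e. [p] or [-p] (see [projV_eq0]),
   and oblique ones. *)
Definition oblique i := ~~ (y i <= V)%MS && (projV (y i) != 0).
Definition polar i := ~~ (y i <= V)%MS && (projV (y i) == 0).

Local Notation noblique := (\sum_i (oblique i : nat))%N.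
Local Notation npolar := (\sum_i (polar i : nat))%N.

Let inV_dotE i : (y i <= V)%MS = (dot (y i) p == 0) := sub_V_dotE (y i).

Lemma equatorial_nonpolar i : (y i <= V)%MS -> projV (y i) != 0.
Proof. by move=> iV; rewrite (projV_id iV); apply: dot_self1_neq0 (yu i). Qed.

Lemma card_nonpolar : #|nonpolar| = (#|equatorial| + noblique)%N.
Proof.
rewrite !card_set_nat -big_split /=; apply: eq_bigr => i _; rewrite /oblique.
by case: (boolP (y i <= V)%MS) => [/equatorial_nonpolar ->|].
Qed.

Lemma card_classes :
  (#|equatorial| + noblique + npolar = N)%N.
Proof.
rewrite card_set_nat -!big_split /= -[RHS]card_ord -sum1_card /=.
by apply: eq_bigr => i _; rewrite /oblique /polar; case: (y i <= V)%MS; case: eqP.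
Qed.

Lemma orthn_le_classes i j : (orthn (y i) (y j) <=
    ((i \in nonpolar) && (j \in nonpolar)) * orthn (projV (y i)) (projV (y j))
    + (oblique i && oblique j && (i != j)) + (polar i && (y j <= V)%MS)
    + ((y i <= V)%MS && polar j))%N.
Proof.
have [yij|/orthn0 -> //] := eqVneq (dot (y i) (y j)) 0; rewrite orthn1 //.
move: yij; rewrite !inE /oblique /polar dot_projV !inV_dotE.
have [ci|ci] := eqVneq (dot (y i) p) 0; have [cj|cj] := eqVneq (dot (y j) p) 0;
  rewrite ?ci ?cj ?mul0r ?mulr0 ?addr0 /= => pij.
- by rewrite orthn1 // !equatorial_nonpolar ?inV_dotE ?ci ?cj.
- rewrite equatorial_nonpolar ?inV_dotE ?ci //=.
  by case: eqP => //= _; rewrite orthn1.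
- rewrite [projV (y j) != 0]equatorial_nonpolar ?inV_dotE ?cj // andbT.
  by case: eqP => //= _; rewrite orthn1.
have cij : dot (y i) p * dot (y j) p != 0 by rewrite mulf_neq0.
have [pi0|pi0] := eqVneq (projV (y i)) 0.
  by move: pij; rewrite pi0 dot0l add0r => /eqP; rewrite (negbTE cij).
have [pj0|pj0] := eqVneq (projV (y j)) 0.
  by move: pij; rewrite pj0 dot0r add0r => /eqP; rewrite (negbTE cij).
have [eij|_] := eqVneq i j; last by rewrite /=; lia.
by move: pij; rewrite eij -dot_projV (yu j) => /eqP; rewrite oner_eq0.
Qed.

Lemma orth_pairs_le_classes :
  (orth_pairs y <= orth_pairs (restrict nonpolar (fun i => projV (y i)))
    + (noblique * noblique - noblique) + 2 * npolar * #|equatorial|)%N.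
Proof.
rewrite orth_pairs_restrict card_set_nat /orth_pairs /orth_deg.
apply: leq_trans.
  by apply: leq_sum => i _; apply: leq_sum => j _; apply: orthn_le_classes.
under eq_bigr do rewrite !big_split /=; rewrite !big_split /= !sum_andb.
set SP := (\sum_(i < N) \sum_(j < N) _ * orthn _ _)%N.
set SK := (\sum_(i < N) \sum_(j < N) (oblique i && oblique j && _ : nat))%N.
set k := (\sum_(i < N) ((y i <= V)%MS : nat))%N.
set s := (\sum_(i < N) (oblique i : nat))%N; set q := (\sum_(i < N) (polar i : nat))%N.
have := sum_andb_neq oblique; rewrite -/SK -/s; lia.
Qed.

Lemma orthn_no_oblique i j : (forall i, ~~ oblique i) ->
  orthn (y i) (y j) = (((y i <= V)%MS && (y j <= V)%MS) * orthn (y i) (y j)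
    + (~~ (y i <= V)%MS && (y j <= V)%MS) + ((y i <= V)%MS && ~~ (y j <= V)%MS))%N.
Proof.
move=> no_obl; have polar_proj l : ~~ (y l <= V)%MS -> projV (y l) = 0.
  by move=> lV; apply/eqP; move: (no_obl l); rewrite /oblique lV negbK.
rewrite /orthn dot_projV !inV_dotE.
have [ci|ci] := eqVneq (dot (y i) p) 0; have [cj|cj] := eqVneq (dot (y j) p) 0;
  rewrite ?ci ?cj ?mul0r ?mulr0 ?addr0 /= ?mul1n ?addn0 //.
- by rewrite (polar_proj j) ?inV_dotE ?cj // dot0r eqxx mul0n.
- by rewrite (polar_proj i) ?inV_dotE ?ci // dot0l eqxx mul0n.
rewrite mul0n (polar_proj i) ?inV_dotE ?ci // dot0l add0r.
by rewrite mulf_eq0 (negbTE ci) (negbTE cj).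
Qed.

Lemma orth_pairs_no_oblique : (forall i, ~~ oblique i) ->
  orth_pairs y = (orth_pairs (restrict equatorial y) + 2 * (N - #|equatorial|) * #|equatorial|)%N.
Proof.
move=> no_obl; rewrite orth_pairs_restrict card_set_nat /orth_pairs /orth_deg.
under [in RHS]eq_bigr do under eq_bigr do rewrite !inE.
under eq_bigr do under eq_bigr do rewrite orthn_no_oblique //.
under eq_bigr do rewrite !big_split /=; rewrite !big_split /= !sum_andb.
set SA := (\sum_(i < N) \sum_(j < N) _ * orthn _ _)%N.
set k := (\sum_(i < N) ((y i <= V)%MS : nat))%N.
set nk := (\sum_(i < N) (~~ (y i <= V)%MS : nat))%N.
have := sum_negb (fun i => (y i <= V)%MS); rewrite -/k -/nk; nia.
Qed.

(* The projections of the equatorial and oblique points form a configuration of [V];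
   the constraint on [D * N] caps the number of oblique points by [#|equatorial| %/ D]. *)
Lemma orth_pairs_pole_bound : (D * N <= #|equatorial| * D.+1)%N ->
  (orth_pairs y + balanced_sqsum #|equatorial| D + 2 * noblique
   <= #|equatorial| * #|equatorial| + 2 * #|equatorial| * (N - #|equatorial|))%N.
Proof.
move=> DN.
have wV : nonzero_in V (restrict nonpolar (fun i => projV (y i))).
  by move=> t; rewrite /restrict; have := enum_valP t; rewrite inE => ->; rewrite projV_sub.
have := orth_pairs_bound rV D_gt0 wV.
have := balanced_sqsum_addn #|equatorial| noblique D_gt0.
have := orth_pairs_le_classes; have := card_classes.
set SP := orth_pairs (restrict _ _); clearbody SP; rewrite card_nonpolar.
set k := #|equatorial| in DN *; set s := noblique; move=> ksq le_S le_Q le_SP.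
have s_le : (s <= k %/ D)%N.
  have := congr1 (muln D) ksq; rewrite !mulnDr => DNE.
  by rewrite leq_divRL //; move: DN; rewrite mulnS; lia.
exact: pole_bound_arith le_S le_SP le_Q s_le ksq.
Qed.

End Classes.

Section Optimum.
Variable N : nat.

Lemma orth_pairs_equatorial_aligned (y : 'I_N -> 'rV[R]_D.+1) (v : 'I_D -> 'rV[R]_D.+1) f :
  in_MN y -> (forall i, ~~ (y i <= V)%MS -> antip (y i) p) ->
  aligned V v f (restrict [set i | (y i <= V)%MS] y) -> balanced f ->
  (orth_pairs y + balanced_sqsum #|[set i | (y i <= V)%MS]| D =
   #|[set i | (y i <= V)%MS]| * #|[set i | (y i <= V)%MS]|
   + 2 * #|[set i | (y i <= V)%MS]| * (N - #|[set i | (y i <= V)%MS]|))%N.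
Proof.
move=> yu yp yal fbal; have no_obl i : ~~ oblique y i.
  rewrite /oblique; case: (boolP (y i <= V)%MS) => //= /yp/(projV_eq0 (yu i)) ->.
  by rewrite eqxx.
rewrite (orth_pairs_no_oblique no_obl).
have := orth_pairs_aligned_balanced D_gt0 yal fbal.
move: (orth_pairs _) => SA; move: #|_| => k; rewrite [(2 * (N - k) * k)%N]mulnAC; lia.
Qed.

Lemma exists_pole_optimum k : (k <= N)%N ->
  exists2 y : 'I_N -> 'rV[R]_D.+1, in_MNkV V k y &
    (orth_pairs y + balanced_sqsum k D = k * k + 2 * k * (N - k))%N.
Proof.
move=> kN; have [e eonb] := exists_onb rV.
pose y (i : 'I_N) := if (i < k)%N then e (ord_mod D_gt0 i) else p.
have yV i : (y i <= V)%MS = (i < k)%N.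
  by rewrite /y; case: ifP => _; [apply: onb_sub eonb | apply/negbTE/pole_notin_V].
have yk : #|[set i | (y i <= V)%MS]| = k.
  rewrite card_set_nat (eq_bigr _ (fun i _ => congr1 nat_of_bool (yV i))).
  by rewrite -big_mkcond /= (big_ord_narrow kN) sum1_card card_ord.
have yu : in_MN y by move=> i; rewrite /on_sphere /y; case: ifP => _ //; apply: onb_unit eonb.
exists y => //.
have yp i : ~~ (y i <= V)%MS -> antip (y i) p by rewrite yV /y => /negbTE ->; left.
pose f (t : 'I_#|[set i | (y i <= V)%MS]|) := ord_mod D_gt0 (enum_val t).
have yal : aligned V e f (restrict [set i | (y i <= V)%MS] y).
  split=> // t; have := enum_valP t; rewrite inE yV /restrict /y => ->.
  by rewrite dot_self1_neq0 ?submx_refl ?(onb_unit _ eonb).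
have fbal : balanced f.
  suff fk j : nfiber f j = nfiber (@ord_mod k D D_gt0) j.
    by move=> a b; rewrite !fk; apply: ord_mod_balanced.
  rewrite /nfiber (sum_restrict _ (fun i => (ord_mod D_gt0 i == j : nat))).
  under eq_bigr => i _ do rewrite inE yV mulnbl.
  rewrite -big_mkcond (big_ord_narrow kN) /=.
  by apply: eq_bigr => i _; rewrite -!val_eqE.
by have := orth_pairs_equatorial_aligned yu yp yal fbal; rewrite yk.
Qed.

End Optimum.

Section Maximizers.
Variables (N k : nat).
Hypotheses (kN : (k <= N)%N) (DN : (D * N <= k * D.+1)%N).

Lemma orth_pairs_MNkV_bound (y : 'I_N -> 'rV[R]_D.+1) : in_MNkV V k y ->
  (orth_pairs y + balanced_sqsum k D + 2 * \sum_i (oblique y i : nat)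
   <= k * k + 2 * k * (N - k))%N.
Proof. by case=> yu yk; rewrite -yk; apply: orth_pairs_pole_bound => //; rewrite yk. Qed.

Lemma maximizes_in_MNkV_value (x : 'I_N -> 'rV[R]_D.+1) : in_MNkV V k x ->
  maximizes (in_MNkV V k) x <->
  (orth_pairs x + balanced_sqsum k D = k * k + 2 * k * (N - k))%N.
Proof.
move=> xk; split=> [[_ xmax]|x_eq]; last first.
  by split=> // y yk; rewrite Einf_le; have := orth_pairs_MNkV_bound yk; lia.
have [y0 y0k y0_eq] := exists_pole_optimum kN.
by have := xmax y0 y0k; rewrite Einf_le; have := orth_pairs_MNkV_bound xk; lia.
Qed.

Lemma maximizes_in_MNkVP (x : 'I_N -> 'rV[R]_D.+1) : in_MNkV V k x ->
  maximizes (in_MNkV V k) x <->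
  (forall i, ~~ (x i <= V)%MS -> antip (x i) p) /\
  exists v : 'I_D -> 'rV[R]_D.+1,
    [/\ onb_of V v, (forall i, (x i <= V)%MS -> exists j, antip (x i) (v j)) &
        forall j, #|[set i | `[< antip (x i) (v j) >]]| = ceil_div k D \/
                  #|[set i | `[< antip (x i) (v j) >]]| = (k %/ D)%N].
Proof.
move=> xk; have [xu xA] := xk; set A := [set i | (x i <= V)%MS] in xA *.
have xW : nonzero_in V (restrict A x).
  by apply: in_MN_nonzero_in => [t|t]; [apply: xu | have := enum_valP t; rewrite inE].
apply: iff_trans (maximizes_in_MNkV_value xk) _.
split=> [x_eq|[xp [v [vonb xv vcount]]]].
  have no_obl i : ~~ oblique x i.
    apply/negP => obl; have := orth_pairs_MNkV_bound xk.
    by rewrite (bigD1 i) //= obl; lia.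
  have w_eq : (orth_pairs (restrict A x) + balanced_sqsum #|A| D = #|A| * #|A|)%N.
    have := orth_pairs_no_oblique no_obl.
    by move: (orth_pairs (restrict _ _)) => SA; rewrite xA; lia.
  have [v [f [wal fbal]]] := orth_pairs_bound_eq rV D_gt0 xW w_eq.
  split=> [i xiV|].
    by apply/(projV_eq0 (xu i))/eqP; have := no_obl i; rewrite /oblique xiV negbK.
  exists v; split=> [|i xiV|j]; first exact: wal.1.
    have iA : i \in A by rewrite inE.
    have xv : (x i <= v (f (enum_rank_in iA i)))%MS.
      by rewrite -{1}(enum_rankK_in iA iA); apply: (wal.2 _).2.
    by exists (f (enum_rank_in iA i)); apply/(sub_onb_antip _ wal.1 (xu i) xv).
  rewrite (card_antip_aligned xu wal.1 (fun t => (wal.2 t).2)).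
  exact: (near_equal_ceil_floor D_gt0 (etrans (sum_nfiber f) xA)).1 fbal j.
have /fin_all_exists[f xf] : forall t : 'I_#|A|, exists j, antip (x (enum_val t)) (v j).
  by move=> t; apply: xv; have := enum_valP t; rewrite inE.
have wal : aligned V v f (restrict A x).
  by split=> [|t]; [| split; [apply: (xW t).1 | apply: antip_sub (xf t)]].
have fbal : balanced f.
  apply: (near_equal_ceil_floor D_gt0 (etrans (sum_nfiber f) xA)).2 => j.
  by rewrite -(card_antip_aligned xu vonb (fun t => antip_sub (xf t))).
by have := orth_pairs_equatorial_aligned xu xp wal fbal; rewrite xA.
Qed.

End Maximizers.

End Pole.

Lemma maximizes_in_MNkV_line (R : realType) N (V : 'M[R]_1) (p : 'rV[R]_1) k
    (x : 'I_N -> 'rV[R]_1) :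
  \rank V = 0%N -> on_sphere p -> (forall z, on_sphere z -> antip z p) -> in_MNkV V k x ->
  maximizes (in_MNkV V k) x <->
  (forall i, ~~ (x i <= V)%MS -> antip (x i) p) /\
  exists v : 'I_0 -> 'rV[R]_1,
    [/\ onb_of V v, (forall i, (x i <= V)%MS -> exists j, antip (x i) (v j)) &
        forall j, #|[set i | `[< antip (x i) (v j) >]]| = ceil_div k 0 \/
                  #|[set i | `[< antip (x i) (v j) >]]| = (k %/ 0)%N].
Proof.
move=> rV0 pu all_p xk; have [xu _] := xk.
have V0 : V = 0 by apply/eqP; rewrite -mxrank_eq0 rV0.
have notV i : ~~ (x i <= V)%MS by rewrite V0 submx0; apply: dot_self1_neq0 (xu i).
have pairs0 (y : 'I_N -> 'rV[R]_1) : in_MN y -> orth_pairs y = 0%N.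
  move=> yu; rewrite /orth_pairs big1 // => i _; rewrite /orth_deg big1 // => j _.
  apply: orthn0; case: (all_p _ (yu i)) => ->; case: (all_p _ (yu j)) => ->;
    by rewrite ?dotNl ?dotNr ?opprK pu ?oppr_eq0 oner_eq0.
split=> [_|_]; last by split=> // y [yu _]; rewrite Einf_le !pairs0.
split=> [i _|]; first exact: all_p.
exists (fun _ => 0); split=> [|i|[]//].
  by apply: orthonormal_onb_of => [[]|j|]; rewrite ?sub0mx.
by rewrite (negbTE (notV i)).
Qed.

Theorem theorem2p1 (R : realType) (D N : nat) :
  (* (a) *)
  (forall x : 'I_N -> 'rV[R]_(D.+1),
     maximizes (@in_MN R D.+1 N) x <->
     exists (v : 'I_(D.+1) -> 'rV[R]_(D.+1)) (y : 'I_N -> 'rV[R]_(D.+1)),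
       [/\ onb_of 1%:M v, in_MN y, dirac_sum x = dirac_sum y &
           forall (i : 'I_N) (j : 'I_(D.+1)),
             (i %% D.+1 = j)%N -> antip (y i) (v j)])
  /\
  (* (b) *)
  (forall (V : 'M[R]_(D.+1)) (p : 'rV[R]_(D.+1)) (k : nat),
     \rank V = D ->
     (forall z : 'rV[R]_(D.+1),
        (on_sphere z /\ forall u : 'rV[R]_(D.+1), (u <= V)%MS -> dot u z = 0)
        <-> (z = p \/ z = - p)) ->
     (k <= N)%N -> (D * N <= k * D.+1)%N ->
     forall x : 'I_N -> 'rV[R]_(D.+1),
       in_MNkV V k x ->
       (maximizes (in_MNkV V k) x <->
        (forall i, ~~ (x i <= V)%MS -> antip (x i) p) /\
        exists v : 'I_D -> 'rV[R]_(D.+1),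
          [/\ onb_of V v,
              (forall i, (x i <= V)%MS -> exists j, antip (x i) (v j)) &
              forall j : 'I_D,
                #|[set i : 'I_N | `[< antip (x i) (v j) >] ]| = ceil_div k D \/
                #|[set i : 'I_N | `[< antip (x i) (v j) >] ]| = (k %/ D)%N])).
Proof.
split=> [|V p k rV Vperp kN DN x xk]; first exact: maximizes_in_MNP.
have [pu pV] := (Vperp p).2 (or_introl erefl).
case: D => [|D] in V p k rV Vperp kN DN x xk pu pV *.
  have V0 : V = 0 by apply/eqP; rewrite -mxrank_eq0 rV.
  apply: maximizes_in_MNkV_line => // z zu; apply/Vperp; split=> // u.
  by rewrite V0 submx0 => /eqP ->; apply: dot0l.
exact: maximizes_in_MNkVP.
Qed.
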